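(* Let $\alpha\in(0,1]$. Restrict to elections with exactly two alternatives and to metrics given by the 1-Euclidean space, meaning all agents and alternatives are points of $\mathbb R$ and $d(x,y)=|x-y|$. Then every deterministic voting rule $f$ using ranked preferences with intensities has, under mandatory elicitation, distortion at least $$\max\left(\frac{3-\alpha}{1+\alpha},\ 2\alpha+1\right).$$
   Context: An election $\mathcal E=(N,A,\vec\sigma)$ has agents $N$, alternatives $A$, and for each agent $i$ a preference $\sigma_i=(\pi_i,\Join_i)$. Here $\pi_i:[m]\to A$ is a bijection ($\pi_i(1)$ most preferred) and $\Join_i:[m-1]\to\{\succ,\succ\!\!\succ\}$. The profile $\vec\sigma$ is $\alpha$-consistent with $d$ (mandatory elicitation) if for all $i$ and $j\in[m-1]$: - $\Join_i(j)=\,\succ$ implies $d(i,\pi_i(j+1))\ge d(i,\pi_i(j))>\alpha d(i,\pi_i(j+1))$; - $\Join_i(j)=\,\succ\!\!\succ$ implies $d(i,\pi_i(j))\le\alpha d(i,\pi_i(j+1))$. In this setting the distortion of $a$ is $\mathsf{dist}_\alpha(a,\mathcal E)=\sup_d\sum_i d(i,a)/\min_b\sum_i d(i,b)$, where the supremum ranges over 1-Euclidean metrics $d$ with which $\vec\sigma$ is $\alpha$-consistent. The distortion of $f$ is the supremum of $\mathsf{dist}_\alpha(f(\vec\sigma),\mathcal E)$ over all two-alternative elections. *)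

From HB Require Import structures.
From mathcomp Require Import all_boot all_order all_algebra.
From mathcomp Require Import reals.
Set Implicit Arguments. Unset Strict Implicit. Unset Printing Implicit Defensive.
Import Order.TTheory GRing.Theory Num.Theory.
Local Open Scope ring_scope.

(* Intensity symbols: Weak is "≻", Strong is "≻≻". *)
Inductive intensity := Weak | Strong.

(* A preference sigma_i = (pi_i, join_i) over a finite set of alternatives A
   with m = #|A|: [rank] lists pi_i(1), ..., pi_i(m) (a bijection onto A,
   most preferred first) and [join] lists join_i(1), ..., join_i(m-1). *)
Record pref (A : finType) := Pref {
  rank : seq A;
  rank_perm : perm_eq rank (enum A);
  join : seq intensity;
  join_size : size join = (#|A|).-1 }.

(* alpha-consistency (mandatory elicitation) of a profile on agents 'I_n with
   a distance d(i, a) between agents and alternatives.  For j in [m-1]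
   (0-based index j with j+1 < m), x = pi_i(j), y = pi_i(j+1). *)
Definition consistent (R : realType) (alpha : R) (A : finType) (n : nat)
    (sigma : 'I_n -> pref A) (d : 'I_n -> A -> R) : Prop :=
  forall (i : 'I_n) (j : nat) (x0 : A), (j.+1 < #|A|)%N ->
    let x := nth x0 (rank (sigma i)) j in
    let y := nth x0 (rank (sigma i)) j.+1 in
    match nth Weak (join (sigma i)) j with
    | Weak => d i x <= d i y /\ alpha * d i y < d i x
    | Strong => d i x <= alpha * d i y
    end.

Definition euclid (R : realType) (n : nat) (A : finType)
    (xs : 'I_n -> R) (ys : A -> R) : 'I_n -> A -> R :=
  fun i a => `|xs i - ys a|.

Definition sc (R : realType) (n : nat) (A : finType) (d : 'I_n -> A -> R)
    (a : A) : R := \sum_(i < n) d i a.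

Definition rule2 := forall n : nat, ('I_n -> pref bool) -> bool.

(** Two voters with opposite rankings and equal intensities form a profile
    invariant under swapping the alternatives, so the metric can be chosen
    after seeing the elected alternative [w]; put [w] at 0.  With strong
    intensities, place [w]'s supporter at [alpha] and both the other
    alternative and its supporter at [1 + alpha]: [w] costs [1 + 2 alpha]
    against [1].  With weak intensities, place [w]'s supporter at [t], the
    other alternative at [2 t] and its supporter at [1 + t]; consistency only
    asks [alpha (1 + t) < 1 - t], i.e. [t < (1 - alpha) / (1 + alpha)], and
    [w] costs [1 + 2 t] against [1], which tends to
    [(3 - alpha) / (1 + alpha)]. *)
From HB Require Import structures.
From mathcomp Require Import all_boot all_order all_algebra.
From mathcomp Require Import reals.
From mathcomp Require Import ring lra.
Import Order.TTheory GRing.Theory Num.Theory.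
Local Open Scope ring_scope.

Lemma pref2_perm (t : bool) : perm_eq [:: t; ~~ t] (enum {: bool}).
Proof. by case: t; rewrite enumT unlock. Qed.

Lemma pref2_size (k : intensity) : size [:: k] = #|{: bool}|.-1.
Proof. by rewrite card_bool. Qed.

Definition pref2 (t : bool) (k : intensity) : pref bool :=
  Pref (pref2_perm t) (pref2_size k).

Definition opposed (k : intensity) : 'I_2 -> pref bool :=
  fun i => pref2 (i == ord0) k.

Section TwoVoterLowerBound.

Variables (R : realType) (alpha : R).

Definition intensity_consistent (k : intensity) (dx dy : R) : Prop :=
  match k with
  | Weak => dx <= dy /\ alpha * dy < dx
  | Strong => dx <= alpha * dy
  end.

Lemma consistent_pref2 (n : nat) (top : 'I_n -> bool) (k : intensity)
    (d : 'I_n -> bool -> R) :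
  (forall i, intensity_consistent k (d i (top i)) (d i (~~ top i))) ->
  consistent alpha (fun i => pref2 (top i) k) d.
Proof. by move=> hd i [|j] x0; rewrite card_bool // => _; apply: hd. Qed.

Definition distortion_gt (f : rule2) (L : R) : Prop :=
  exists (n : nat) (sigma : 'I_n -> pref bool) (xs : 'I_n -> R) (ys : bool -> R),
    consistent alpha sigma (euclid xs ys) /\
    L * Num.min (sc (euclid xs ys) true) (sc (euclid xs ys) false)
    < sc (euclid xs ys) (f n sigma).

(* The elected alternative sits at 0 and the other one at [c]; the voter
   ranking the elected one first sits at [p], the other voter at [r]. *)
Lemma opposed_distortion_gt (f : rule2) (k : intensity) (L p r c : R) :
  intensity_consistent k `|p| `|p - c| ->
  intensity_consistent k `|r - c| `|r| ->
  L * Num.min (`|p| + `|r|) (`|p - c| + `|r - c|) < `|p| + `|r| ->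
  distortion_gt f L.
Proof.
move=> hp hr hL; exists 2%N, (opposed k).
exists (fun i => if (i == ord0) == f 2%N (opposed k) then p else r).
exists (fun b => if b == f 2%N (opposed k) then 0 else c); split.
  apply: consistent_pref2 => i; rewrite /euclid.
  by case: (i == ord0); case: (f 2%N (opposed k)); rewrite /= ?subr0.
rewrite /sc /euclid !big_ord_recl !big_ord0 /=.
case: (f 2%N (opposed k)) hL; rewrite /= !subr0 !addr0 //.
by rewrite minC !(addrC `|r|) (addrC `|r - c|).
Qed.

Lemma distortion_gt_strong (f : rule2) (L : R) :
  0 < alpha -> L < 2 * alpha + 1 -> distortion_gt f L.
Proof.
move=> alpha_gt0 hL.
have dp : `|alpha - (1 + alpha)| = 1.
  by rewrite (_ : alpha - (1 + alpha) = - 1) ?normrN ?normr1 //; ring.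
apply: (@opposed_distortion_gt f Strong L alpha (1 + alpha) (1 + alpha));
  rewrite /= ?dp ?subrr ?normr0 !ger0_norm ?mulr_ge0 //; try lra.
by rewrite min_r; lra.
Qed.

Lemma distortion_gt_weak (f : rule2) (L t : R) :
  0 < alpha -> 0 < t -> alpha * (1 + t) < 1 - t -> L < 1 + 2 * t ->
  distortion_gt f L.
Proof.
move=> alpha_gt0 t_gt0 ht hL.
have t1_gt0 : 0 < 1 + t by lra.
have alpha_lt1 : alpha < 1 by rewrite -(ltr_pM2r t1_gt0) mul1r; lra.
have alpha_t : alpha * t < t by rewrite -[ltRHS]mul1r ltr_pM2r.
have t_lt1 : t < 1 by have := mulr_ge0 (ltW alpha_gt0) (ltW t1_gt0); lra.
have dp : `|t - 2 * t| = t.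
  by rewrite (_ : t - 2 * t = - t) ?normrN ?gtr0_norm //; ring.
have dr : `|1 + t - 2 * t| = 1 - t.
  by rewrite (_ : 1 + t - 2 * t = 1 - t) ?gtr0_norm ?subr_gt0 //; ring.
apply: (@opposed_distortion_gt f Weak L t (1 + t) (2 * t));
  rewrite /= ?dp ?dr !gtr0_norm //; try lra.
by rewrite min_r; lra.
Qed.

Lemma distortion_gt_below_max (f : rule2) (L : R) :
  0 < alpha -> L < Num.max ((3 - alpha) / (1 + alpha)) (2 * alpha + 1) ->
  distortion_gt f L.
Proof.
move=> alpha_gt0; set t0 := (1 - alpha) / (1 + alpha).
have -> : (3 - alpha) / (1 + alpha) = 1 + 2 * t0 by rewrite /t0; field; lra.
have [hstrong _ | hweak] := ltP L (2 * alpha + 1).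
  exact: distortion_gt_strong.
rewrite lt_max => /orP[hL | ]; last by lra.
set m := Num.min (t0 / 2) ((1 + 2 * t0 - L) / 4).
have m_gt0 : 0 < m by rewrite lt_min; apply/andP; split; lra.
have m_le : m <= t0 / 2 /\ m <= (1 + 2 * t0 - L) / 4.
  by rewrite !ge_min !lexx orbT.
apply: (@distortion_gt_weak f L (t0 - m)) => //; try lra.
suff : (t0 - m) * (1 + alpha) < 1 - alpha by lra.
by rewrite -ltr_pdivlMr -/t0; lra.
Qed.

End TwoVoterLowerBound.

Theorem theorem6 (R : realType) (alpha : R) (halpha : 0 < alpha <= 1)
    (f : rule2) (eps : R) (heps : 0 < eps) :
  exists (n : nat) (sigma : 'I_n -> pref bool) (xs : 'I_n -> R) (ys : bool -> R),
    consistent alpha sigma (euclid xs ys) /\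
    (Num.max ((3 - alpha) / (1 + alpha)) (2 * alpha + 1) - eps)
      * Num.min (sc (euclid xs ys) true) (sc (euclid xs ys) false)
    < sc (euclid xs ys) (f n sigma).
Proof.
(* The construction does not need [alpha <= 1]. *)
case/andP: halpha => alpha_gt0 _.
by apply: distortion_gt_below_max => //; lra.
Qed.
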